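(* Let $K$ be a non-archimedean local field and let $G$ be a discrete subgroup of $\mathrm{PSL}_2(K)$ with no $2$-torsion. For each vertex $v$ and each edge $e$ of the Bruhat--Tits tree $T_K$, the stabilisers $G_v$ and $G_e$ each have a unique lift to $\mathrm{SL}_2(K)$; that is, for $H\in\{G_v,G_e\}$ there exists exactly one homomorphism $\phi\colon H\to\mathrm{SL}_2(K)$ with $\pi\circ\phi=\mathrm{id}_H$, where $\pi\colon\mathrm{SL}_2(K)\to\mathrm{PSL}_2(K)$ is the quotient map.
   Context: $T_K$ is the Bruhat--Tits tree on which $\mathrm{PSL}_2(K)$ acts; $G_v$, $G_e$ denote the stabilisers in $G$ of the vertex $v$ and the edge $e$. *)

From HB Require Import structures.
From mathcomp Require Import all_boot all_order all_algebra.
From Stdlib Require Import ClassicalEpsilon.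

Set Implicit Arguments.
Unset Strict Implicit.
Unset Printing Implicit Defensive.

Import Order.TTheory GRing.Theory Num.Theory.
Local Open Scope ring_scope.

Section BruhatTits.

Variable K : fieldType.

(** ** Non-archimedean local fields.
    [v : K -> int] is a normalised discrete valuation; its value at 0 is
    irrelevant (all axioms only concern nonzero arguments, and
    "x is close to y" is phrased as [x = y \/ n <= v (x - y)]). *)
Variable v : K -> int.

Definition vclose (n : int) (a b : K) : Prop := a = b \/ n <= v (a - b).

Definition inO (x : K) : Prop := x = 0 \/ 0 <= v x.

Definition is_discrete_valuation : Prop :=
  [/\ (forall x y, x != 0 -> y != 0 -> v (x * y) = v x + v y),
      (forall x y, x != 0 -> y != 0 -> x + y != 0 ->
                   Num.min (v x) (v y) <= v (x + y))
    & (exists p : K, p != 0 /\ v p = 1)].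

(** residue field O / m is finite: finitely many residue representatives *)
Definition finite_residue_field : Prop :=
  exists s : seq K, (forall a, a \in s -> inO a) /\
    forall x, inO x -> exists2 a, a \in s & vclose 1 x a.

Definition v_complete : Prop :=
  forall u : nat -> K,
    (forall n : int, exists N, forall m p, (N <= m)%N -> (N <= p)%N ->
        vclose n (u m) (u p)) ->
    exists l : K, forall n : int, exists N, forall m, (N <= m)%N ->
        vclose n (u m) l.

Definition is_nonarch_local_field : Prop :=
  [/\ is_discrete_valuation, finite_residue_field & v_complete].

(** ** SL_2 and PSL_2 = SL_2 / {+-1}.
    An element of PSL_2(K) is a coset {M, -M} of a determinant-one matrix,
    represented as a set of matrices. *)
Definition pclass (M : 'M[K]_2) : 'M[K]_2 -> Prop := fun N => N = M \/ N = - M.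

Definition is_psl2 (X : 'M[K]_2 -> Prop) : Prop :=
  exists M, \det M = 1 /\ forall N, X N <-> pclass M N.

Record PSL2 := MkPSL2 { pset : 'M[K]_2 -> Prop ; pset_ok : is_psl2 pset }.

Definition rep (x : PSL2) : 'M[K]_2 :=
  proj1_sig (constructive_indefinite_description _ (pset_ok x)).

Lemma rep_det (x : PSL2) : \det (rep x) = 1.
Proof.
by rewrite /rep; case: constructive_indefinite_description => M [].
Qed.

Lemma pclass_ok (M : 'M[K]_2) : \det M = 1 -> is_psl2 (pclass M).
Proof. by move=> HM; exists M; split. Qed.

Definition pi_SL2 (M : 'M[K]_2) (HM : \det M = 1) : PSL2 := MkPSL2 (pclass_ok HM).

Definition lifts_to (M : 'M[K]_2) (x : PSL2) : Prop :=
  \det M = 1 /\ forall N, pset x N <-> pclass M N.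

Lemma det_one_mx : \det (1%:M : 'M[K]_2) = 1.
Proof. exact: det1. Qed.

Definition punit : PSL2 := pi_SL2 det_one_mx.

Lemma det_mul_rep (x y : PSL2) : \det (rep x *m rep y) = 1.
Proof. by rewrite det_mulmx !rep_det mulr1. Qed.

Definition pmul (x y : PSL2) : PSL2 := pi_SL2 (det_mul_rep x y).

Lemma det_inv_rep (x : PSL2) : \det (invmx (rep x)) = 1.
Proof. by rewrite det_inv rep_det invr1. Qed.

Definition pinv (x : PSL2) : PSL2 := pi_SL2 (det_inv_rep x).

Definition is_subgroup (G : PSL2 -> Prop) : Prop :=
  [/\ G punit, (forall x y, G x -> G y -> G (pmul x y))
    & (forall x, G x -> G (pinv x))].

Definition no_2_torsion (G : PSL2 -> Prop) : Prop :=
  forall x, G x -> pmul x x = punit -> x = punit.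

(** topology of PSL_2(K): quotient of the valuation topology on SL_2(K);
    x and y are n-close if some representatives are entrywise n-close.
    G is discrete: every point of G is isolated in G. *)
Definition pclose (n : int) (x y : PSL2) : Prop :=
  exists A B, pset x A /\ pset y B /\ forall i j, vclose n (A i j) (B i j).

Definition is_discrete (G : PSL2 -> Prop) : Prop :=
  forall x, G x -> exists n : int, forall y, G y -> pclose n x y -> y = x.

(** Vertices: homothety classes of O-lattices in K^2; the lattice with basis
    the columns of an invertible g is [lattice g].  A vertex is given by such
    a g (every vertex arises this way). *)
Definition vset := 'cV[K]_2 -> Prop.

Definition lattice (g : 'M[K]_2) : vset :=
  fun w => exists c : 'cV[K]_2, (forall i, inO (c i 0)) /\ w = g *m c.

Definition img (A : 'M[K]_2) (L : vset) : vset :=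
  fun w => exists u, L u /\ w = A *m u.

Definition scale (a : K) (L : vset) : vset :=
  fun w => exists u, L u /\ w = a *: u.

Definition vsubset (L L' : vset) : Prop := forall w, L w -> L' w.

Definition homothetic (L L' : vset) : Prop :=
  exists a : K, a != 0 /\ forall w, scale a L w <-> L' w.

Definition acts_to (x : PSL2) (g h : 'M[K]_2) : Prop :=
  exists A, pset x A /\ homothetic (img A (lattice g)) (lattice h).

Definition adjacent (g h : 'M[K]_2) : Prop :=
  exists p a : K, p != 0 /\ v p = 1 /\ a != 0 /\
    vsubset (scale p (lattice g)) (scale a (lattice h)) /\
    ~ vsubset (scale a (lattice h)) (scale p (lattice g)) /\
    vsubset (scale a (lattice h)) (lattice g) /\
    ~ vsubset (lattice g) (scale a (lattice h)).

Definition vertex_stab (G : PSL2 -> Prop) (g : 'M[K]_2) : PSL2 -> Prop :=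
  fun x => G x /\ acts_to x g g.

Definition edge_stab (G : PSL2 -> Prop) (g h : 'M[K]_2) : PSL2 -> Prop :=
  fun x => G x /\ ((acts_to x g g /\ acts_to x h h) \/
                   (acts_to x g h /\ acts_to x h g)).

Definition is_lift (H : PSL2 -> Prop) (phi : PSL2 -> 'M[K]_2) : Prop :=
  (forall x, H x -> lifts_to (phi x) x) /\
  (forall x y, H x -> H y -> phi (pmul x y) = phi x *m phi y).

Definition unique_lift (H : PSL2 -> Prop) : Prop :=
  exists phi, is_lift H phi /\
    forall psi, is_lift H psi -> forall x, H x -> psi x = phi x.

End BruhatTits.

(* A vertex or edge stabiliser H moves a lattice by a bounded amount, so its
   elements have representatives in SL_2(K) whose entries have valuation
   bounded below.  As the residue field is finite, such matrices are
   approximated to any precision by finitely many of them, and two elements of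
   the discrete group G with close enough representatives coincide: H is finite.
   Its preimage in SL_2(K) is a finite group with central involution -1 in
   which the only square roots of 1 and -1 are 1 and -1 (G has no 2-torsion).
   Hence H has odd order, and by Schur-Zassenhaus the preimage is {1, -1} x N;
   sending x to its representative in N is a lift.  The elements of N and of
   the image of any lift have odd order, and M, -M cannot both have odd order,
   so the lift is unique.  In characteristic 2, -M = M and there is nothing to
   prove. *)

From HB Require Import structures.
From mathcomp Require Import all_boot all_order all_algebra all_fingroup all_solvable.
From mathcomp Require Import zify ring.
From Stdlib Require Import ClassicalEpsilon FunctionalExtensionality.
From Stdlib Require Import PropExtensionality ProofIrrelevance.

Set Implicit Arguments.
Unset Strict Implicit.
Unset Printing Implicit Defensive.

Import Order.TTheory GRing.Theory Num.Theory.

Local Open Scope ring_scope.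

Section CentralInvolution.
Local Open Scope group_scope.
Variables (gT : finGroupType) (z : gT).
Hypothesis order_z : #[z] = 2%N.
Hypothesis z_central : forall a : gT, commute z a.
Hypothesis sqrt_cycle_z : forall a : gT, a * a \in <[z]> -> a \in <[z]>.

Lemma cycle_z : <[z]> = [set 1; z].
Proof. exact: cycle2g. Qed.

Lemma z_neq1 : z != 1.
Proof. by rewrite -order_eq1 order_z. Qed.

Lemma expz_odd k : odd k -> z ^+ k = z.
Proof. by move=> k_odd; rewrite -expg_mod_order order_z modn2 k_odd expg1. Qed.

(* If #[a] = 2q, then a^q is a square root of 1 other than 1, so a^q = z and
   both 1 and z * 1 lie in N. *)
Lemma mul_closed_odd_order (N : gT -> Prop) :
  (forall a b, N a -> N b -> N (a * b)) -> (forall a, N a -> ~ N (z * a)) ->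
  forall a, N a -> odd #[a].
Proof.
move=> NM Nz a Na; apply/negPn/negP => even_a.
have Nexp k : N (a ^+ k.+1) by elim: k => [|k IH]; rewrite ?expg1 // expgS; apply: NM.
set q := #[a]./2.
have def_a : #[a] = (q + q)%N.
  by rewrite addnn /q -[in LHS](odd_double_half #[a]) (negbTE even_a).
have q_gt0 : (0 < q)%N by move: (order_gt0 a); rewrite def_a; case: q {def_a}.
have : a ^+ q \in <[z]> by rewrite sqrt_cycle_z // -expgD -def_a expg_order group1.
rewrite cycle_z !inE => /orP [/eqP aq1 | /eqP aqz].
  have : (#[a] %| q)%N by rewrite order_dvdn aq1.
  by move/(dvdn_leq q_gt0); rewrite def_a; lia.
apply: (Nz 1); first by rewrite -(expg_order a) -(prednK (order_gt0 a)).
by rewrite mulg1 -aqz -(prednK q_gt0).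
Qed.

Lemma odd_order_zmul a : odd #[a] -> odd #[z * a] -> False.
Proof.
move=> odd_a odd_za; set k := (#[a] * #[z * a])%N.
have : (z * a) ^+ k = 1 by apply/eqP; rewrite -order_dvdn dvdn_mull.
rewrite expgMn // expz_odd ?oddM ?odd_a ?odd_za //.
have -> : a ^+ k = 1 by apply/eqP; rewrite -order_dvdn dvdn_mulr.
by rewrite mulg1 => z1; move: z_neq1; rewrite z1 eqxx.
Qed.

Lemma cycle_z_normal : <[z]> <| [set: gT].
Proof.
by apply: sub_center_normal; rewrite cycle_subG; apply/centerP; split.
Qed.

(* The quotient by <[z]> has odd order by Cauchy: an element of order 2 in it
   would lift to a square root of z outside <[z]>. *)
Lemma Hall_cycle_z : Hall [set: gT] <[z]>.
Proof.
have nZ := cycle_z_normal.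
rewrite /Hall subsetT /= -card_quotient ?normal_norm //.
have -> : #|<[z]>| = 2%N by exact: order_z.
rewrite coprime2n.
apply/negPn/negP; rewrite -dvdn2 => /Cauchy [] // X _ order_X.
have [x nx def_X] := cosetP X.
have x_notin : x \notin <[z]>.
  by apply/negP => xZ; move: order_X; rewrite def_X coset_id // order1.
move: x_notin; rewrite sqrt_cycle_z //; apply: coset_idr; first by rewrite groupM.
by rewrite morphM //= -def_X -expg2 -order_X expg_order.
Qed.

Lemma exists_complement_z :
  exists N : {group gT}, forall a, (a \in N) = (z * a \notin N).
Proof.
have nZ := cycle_z_normal.
have /splitsP [N /complP [tiZN defZN]] := SchurZassenhaus_split Hall_cycle_z nZ.
have z_notin : z \notin N.
  apply: contraNN z_neq1 => zN.
  have : z \in <[z]> :&: N by rewrite inE zN cycle_id.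
  by rewrite tiZN inE.
exists N => a; apply/idP/idP => [aN | zaN].
  by apply: contra z_notin => zaN; rewrite -(mulgK a z) groupM ?groupV.
have : a \in <[z]> * N by rewrite defZN inE.
case/mulsgP => y n; rewrite cycle_z !inE => /orP [] /eqP -> nN def_a.
  by rewrite def_a mul1g.
by move: zaN; rewrite def_a mulgA -expg2 -order_z expg_order mul1g nN.
Qed.

End CentralInvolution.

Lemma seq_of_finite_pred (T : eqType) (P : T -> Prop) (l : seq T) :
  (forall x, P x -> x \in l) -> exists s : seq T, forall x, P x <-> x \in s.
Proof.
move=> Pl; exists [seq x <- l | if excluded_middle_informative (P x) then true else false].
move=> x; rewrite mem_filter; case: excluded_middle_informative => [Px | nPx] /=.
  by rewrite Pl.
by split.
Qed.

Section FiniteSubgroupSL2.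
Variable K : fieldType.
Hypothesis two_neq0 : (2 : K) != 0.
Variable S : 'M[K]_2 -> Prop.
Variable s : seq 'M[K]_2.
Hypothesis memS : forall M, S M <-> M \in s.
Hypothesis S1 : S 1%:M.
Hypothesis SM : forall A B, S A -> S B -> S (A *m B).
Hypothesis SN : forall A, S A -> S (- A).
Hypothesis SV : forall A, S A -> S (invmx A).
Hypothesis SU : forall A, S A -> A \in unitmx.
Hypothesis S_sqrt : forall M, S M ->
  M *m M = 1%:M \/ M *m M = - 1%:M -> M = 1%:M \/ M = - 1%:M.

Definition subSL2 := seq_sub s.
HB.instance Definition _ := Finite.copy subSL2 (seq_sub s).

Definition inSL2 M (SM : S M) : subSL2 := Sub M ((memS M).1 SM).

Lemma S_val (a : subSL2) : S (val a).
Proof. exact/memS/valP. Qed.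

Definition mulSL2 (a b : subSL2) := inSL2 (SM (S_val a) (S_val b)).
Definition oneSL2 := inSL2 S1.
Definition invSL2 (a : subSL2) := inSL2 (SV (S_val a)).

Lemma mulSL2A : associative mulSL2.
Proof. by move=> a b c; apply: val_inj; rewrite /= mulmxA. Qed.

Lemma mul1SL2 : left_id oneSL2 mulSL2.
Proof. by move=> a; apply: val_inj; rewrite /= mul1mx. Qed.

Lemma mulVSL2 : left_inverse oneSL2 invSL2 mulSL2.
Proof. by move=> a; apply: val_inj; rewrite /= mulVmx //; apply/SU/S_val. Qed.

HB.instance Definition _ := Finite_isGroup.Build subSL2 mulSL2A mul1SL2 mulVSL2.

Definition minus1 : subSL2 := inSL2 (SN S1).

Lemma valM (a b : subSL2) : val (a * b)%g = val a *m val b. Proof. by []. Qed.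

Lemma val_minus1M (a : subSL2) : val (minus1 * a)%g = - val a.
Proof. by rewrite valM /= mulNmx mul1mx. Qed.

Lemma minus1_neq1 : minus1 != 1%g.
Proof.
apply/eqP => /(congr1 val) /matrixP /(_ 0 0); rewrite !mxE /= => /eqP.
by rewrite eq_sym -subr_eq0 opprK -mulr2n (negbTE two_neq0).
Qed.

Lemma order_minus1 : #[minus1]%g = 2%N.
Proof.
have : (#[minus1]%g %| 2)%N.
  rewrite order_dvdn expgS expg1; apply/eqP/val_inj.
  by rewrite valM /= mulmxN mulNmx mul1mx opprK.
by apply: (prime_nt_dvdP _); rewrite ?order_eq1 ?minus1_neq1.
Qed.

Lemma minus1_central (a : subSL2) : commute minus1 a.
Proof. by apply: val_inj; rewrite !valM /= mulNmx mulmxN mul1mx mulmx1. Qed.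

Lemma sqrt_cycle_minus1 (a : subSL2) : (a * a)%g \in <[minus1]>%g -> a \in <[minus1]>%g.
Proof.
rewrite cycle2g ?order_minus1 // !inE => sq_a.
have /S_sqrt [] : val a *m val a = 1%:M \/ val a *m val a = - 1%:M.
  by case/orP: sq_a => /eqP/(congr1 val); rewrite valM => ->; [left | right].
- exact: S_val.
- by move=> a1; apply/orP; left; apply/eqP/val_inj.
- by move=> aN1; apply/orP; right; apply/eqP/val_inj.
Qed.

Definition mx_mul_closed (N : 'M[K]_2 -> Prop) := forall A B, N A -> N B -> N (A *m B).

Definition sign_free (N : 'M[K]_2 -> Prop) := forall M, N M -> ~ N (- M).

Lemma sign_free_odd_order (N : 'M[K]_2 -> Prop) (a : subSL2) :
  mx_mul_closed N -> sign_free N -> N (val a) -> odd #[a]%g.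
Proof.
move=> NM Nfree.
apply: (@mul_closed_odd_order _ _ order_minus1 sqrt_cycle_minus1 (fun b => N (val b))).
  by move=> b c Nb Nc; apply: NM.
by move=> b Nb; rewrite val_minus1M; apply: Nfree.
Qed.

Lemma sign_free_opp (N N' : 'M[K]_2 -> Prop) M : S M ->
  mx_mul_closed N -> sign_free N -> mx_mul_closed N' -> sign_free N' ->
  N M -> N' (- M) -> False.
Proof.
move=> SM' NM Nfree N'M N'free NM' N'M'.
apply: (odd_order_zmul order_minus1 minus1_central (a := inSL2 SM')).
  exact: sign_free_odd_order NM'.
by apply: (sign_free_odd_order N'M); rewrite // val_minus1M.
Qed.

Lemma exists_complement_section : exists N : 'M[K]_2 -> Prop,
  [/\ forall M, N M -> S M, mx_mul_closed N,
      forall M, S M -> N M \/ N (- M) & sign_free N].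
Proof.
have [N defN] := exists_complement_z order_minus1 minus1_central sqrt_cycle_minus1.
exists (fun M => exists2 a : subSL2, a \in N & val a = M); split.
- by move=> _ [a _ <-]; apply: S_val.
- by move=> _ _ [a aN <-] [b bN <-]; exists (a * b)%g; rewrite ?groupM.
- move=> M SM'; set a := inSL2 SM'.
  have [aN | aNN] := boolP (a \in N); first by left; exists a.
  right; exists (minus1 * a)%g; last by rewrite val_minus1M.
  by move: aNN; rewrite defN negbK.
- move=> _ [a aN <-] [b bN def_b].
  have ab : (minus1 * b)%g = a by apply: val_inj; rewrite val_minus1M def_b opprK.
  by move: bN; rewrite defN ab aN.
Qed.

Lemma exists_sign_section : exists N : 'M[K]_2 -> Prop,
  [/\ mx_mul_closed N, forall M, S M -> N M \/ N (- M), sign_free N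
     & forall N' M, mx_mul_closed N' -> sign_free N' -> N M -> ~ N' (- M)].
Proof.
have [N [NS NM Ncover Nfree]] := exists_complement_section.
exists N; split=> // N' M N'M N'free NM'.
exact: sign_free_opp (NS M NM') NM Nfree N'M N'free NM'.
Qed.

End FiniteSubgroupSL2.

Section Lifts.
Variable K : fieldType.
Implicit Types (x y : PSL2 K) (A B M : 'M[K]_2).

Lemma psl2_ext x y : (forall M, pset x M <-> pset y M) -> x = y.
Proof.
case: x => X okX; case: y => Y okY /= XY.
have eXY : X = Y.
  by apply: functional_extensionality => M; apply: propositional_extensionality.
by subst Y; rewrite (proof_irrelevance _ okX okY).
Qed.

Lemma detN2 A : \det (- A) = \det A.
Proof. by rewrite -scaleN1r detZ expr2 mulrNN !mul1r. Qed.

Lemma invmxN A : A \in unitmx -> invmx (- A) = - invmx A.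
Proof.
by move=> uA; rewrite -!scaleN1r invmxZ ?invrN1 // unitmxE scaleN1r detN2 -unitmxE.
Qed.

Lemma rep_lifts x : lifts_to (rep x) x.
Proof. by rewrite /rep; case: constructive_indefinite_description => M []. Qed.

Lemma lifts_pset A x : lifts_to A x -> pset x A.
Proof. by case=> _ xA; apply/xA; left. Qed.

Lemma lifts_uniq A B x : lifts_to A x -> lifts_to B x -> B = A \/ B = - A.
Proof. by move=> [_ xA] /lifts_pset /xA. Qed.

Lemma lifts_pm A B x : lifts_to A x -> B = A \/ B = - A -> lifts_to B x.
Proof.
move=> [detA xA] BA; split; first by case: BA => ->; rewrite ?detN2.
move=> M; rewrite xA /pclass; case: BA => -> //.
by rewrite opprK; split; case=> ->; by [left | right].
Qed.

Lemma lifts_opp A x : lifts_to A x -> lifts_to (- A) x.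
Proof. by move=> xA; apply: lifts_pm xA _; right. Qed.

Lemma pset_lifts A x : pset x A -> lifts_to A x.
Proof. by case: (rep_lifts x) => _ xr /xr; apply: lifts_pm (rep_lifts x). Qed.

Lemma lifts_inj A x y : lifts_to A x -> lifts_to A y -> x = y.
Proof. by move=> [_ xA] [_ yA]; apply: psl2_ext => M; rewrite xA yA. Qed.

Lemma lifts_unit A x : lifts_to A x -> A \in unitmx.
Proof. by case=> detA _; rewrite unitmxE detA unitr1. Qed.

Lemma lifts_neq0 A x : lifts_to A x -> A != 0.
Proof.
by case=> detA _; apply: contra_eqN detA => /eqP ->; rewrite det0 eq_sym oner_eq0.
Qed.

Lemma lifts_pi M (detM : \det M = 1) : lifts_to M (pi_SL2 detM).
Proof. by split. Qed.

Lemma lifts_one : lifts_to 1%:M (punit K).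
Proof. exact: lifts_pi. Qed.

Lemma lifts_mul A B x y : lifts_to A x -> lifts_to B y -> lifts_to (A *m B) (pmul x y).
Proof.
move=> xA yB; apply: lifts_pm (lifts_pi (det_mul_rep x y)) _.
case: (lifts_uniq (rep_lifts x) xA) => ->; case: (lifts_uniq (rep_lifts y) yB) => ->;
  rewrite ?mulNmx ?mulmxN ?opprK; by [left | right].
Qed.

Lemma lifts_inv A x : lifts_to A x -> lifts_to (invmx A) (pinv x).
Proof.
move=> xA; apply: lifts_pm (lifts_pi (det_inv_rep x)) _.
case: (lifts_uniq (rep_lifts x) xA) => ->; first by left.
by right; rewrite invmxN ?opprK //; apply: lifts_unit (rep_lifts x).
Qed.

End Lifts.

Section LiftFiniteSubgroup.
Variable K : fieldType.
Variable H : PSL2 K -> Prop.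
Implicit Types (x y : PSL2 K) (A B M : 'M[K]_2).

Lemma unique_lift_char2 : (2 : K) = 0 -> unique_lift H.
Proof.
move=> two0; have oppK M : - M = M.
  by apply/eqP; rewrite eq_sym -subr_eq0 opprK -mulr2n -scaler_nat two0 scale0r.
exists (@rep K); split.
  split=> [x _ | x y _ _]; first exact: rep_lifts.
  have xy := lifts_mul (rep_lifts x) (rep_lifts y).
  by case: (lifts_uniq xy (rep_lifts (pmul x y))) => ->.
by move=> psi [psi_lifts _] x Hx; case: (lifts_uniq (rep_lifts x) (psi_lifts x Hx)) => ->.
Qed.

Hypothesis H_subgroup : is_subgroup H.
Hypothesis H_no2 : no_2_torsion H.

Definition sl2_preimage M := exists2 x, H x & lifts_to M x.

Lemma preimage_one : sl2_preimage 1%:M.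
Proof. by case: H_subgroup => H1 _ _; exists (punit K); last exact: lifts_one. Qed.

Lemma preimage_mul A B : sl2_preimage A -> sl2_preimage B -> sl2_preimage (A *m B).
Proof.
case: H_subgroup => _ HM _ [x Hx xA] [y Hy yB].
by exists (pmul x y); [apply: HM | apply: lifts_mul].
Qed.

Lemma preimage_opp A : sl2_preimage A -> sl2_preimage (- A).
Proof. by case=> x Hx xA; exists x => //; apply: lifts_opp. Qed.

Lemma preimage_inv A : sl2_preimage A -> sl2_preimage (invmx A).
Proof.
case: H_subgroup => _ _ HV [x Hx xA].
by exists (pinv x); [apply: HV | apply: lifts_inv].
Qed.

Lemma preimage_unit A : sl2_preimage A -> A \in unitmx.
Proof. by case=> x _; apply: lifts_unit. Qed.

Lemma preimage_sqrt M : sl2_preimage M ->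
  M *m M = 1%:M \/ M *m M = - 1%:M -> M = 1%:M \/ M = - 1%:M.
Proof.
case=> x Hx xM sqM.
have x1 : x = punit K.
  apply: H_no2 => //; apply: lifts_inj (lifts_mul xM xM) _.
  by apply: lifts_pm (lifts_one K) _.
by move: xM; rewrite x1 => /(lifts_uniq (lifts_one K)).
Qed.

Definition section_lift (N : 'M[K]_2 -> Prop) x : 'M[K]_2 :=
  epsilon (inhabits 0) (fun M => N M /\ lifts_to M x).

Lemma section_liftP (N : 'M[K]_2 -> Prop) x :
  (forall M, sl2_preimage M -> N M \/ N (- M)) -> H x ->
  N (section_lift N x) /\ lifts_to (section_lift N x) x.
Proof.
move=> Ncover Hx; apply: (epsilon_spec (inhabits 0) (fun M => N M /\ lifts_to M x)).
have xr := rep_lifts x.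
case: (Ncover _ (ex_intro2 _ _ x Hx xr)) => Nr; first by exists (rep x).
by exists (- rep x); split=> //; apply: lifts_opp.
Qed.

Lemma sign_free_lifts_uniq (N : 'M[K]_2 -> Prop) M M' x : sign_free N ->
  N M -> N M' -> lifts_to M x -> lifts_to M' x -> M' = M.
Proof.
move=> Nfree NM NM' xM xM'.
by case: (lifts_uniq xM xM') => // defM'; case: (Nfree M); rewrite // -defM'.
Qed.

Lemma section_lift_is_lift (N : 'M[K]_2 -> Prop) :
  mx_mul_closed N -> (forall M, sl2_preimage M -> N M \/ N (- M)) -> sign_free N ->
  is_lift H (section_lift N).
Proof.
move=> NM Ncover Nfree; split=> [x Hx | x y Hx Hy].
  by case: (section_liftP Ncover Hx).
case: H_subgroup => _ HM _.
have [Nx xN] := section_liftP Ncover Hx; have [Ny yN] := section_liftP Ncover Hy.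
have [Nxy xyN] := section_liftP Ncover (HM _ _ Hx Hy).
exact: sign_free_lifts_uniq Nfree (NM _ _ Nx Ny) Nxy (lifts_mul xN yN) xyN.
Qed.

Definition lift_image (psi : PSL2 K -> 'M[K]_2) M := exists2 y, H y & M = psi y.

Lemma lift_image_mul_closed psi : is_lift H psi -> mx_mul_closed (lift_image psi).
Proof.
case: H_subgroup => _ HM _ [_ psiM] _ _ [x Hx ->] [y Hy ->].
by exists (pmul x y); rewrite ?psiM //; apply: HM.
Qed.

Lemma lift_image_sign_free psi :
  (2 : K) != 0 -> is_lift H psi -> sign_free (lift_image psi).
Proof.
move=> two_neq0 [psi_lifts _] _ [x Hx ->] [y Hy psi_y].
have xy : x = y.
  by apply: lifts_inj (lifts_opp (psi_lifts x Hx)) _; rewrite psi_y; apply: psi_lifts.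
have oppK : psi x = - psi x by rewrite psi_y xy.
have : (2 : K) *: psi x = 0 by rewrite scaler_nat mulr2n {1}oppK addNr.
move/eqP; rewrite scaler_eq0 (negbTE two_neq0) /=.
exact/negP/(lifts_neq0 (psi_lifts x Hx)).
Qed.

Variable l : seq 'M[K]_2.
Hypothesis preimage_in_l : forall M, sl2_preimage M -> M \in l.

Lemma unique_lift_finite : unique_lift H.
Proof.
case: (eqVneq (2 : K) 0) => [/unique_lift_char2 // | two_neq0].
have [s memS] := seq_of_finite_pred preimage_in_l.
have [N [NM Ncover Nfree Nopp]] := exists_sign_section two_neq0 memS preimage_one
  preimage_mul preimage_opp preimage_inv preimage_unit preimage_sqrt.
exists (section_lift N); split; first exact: section_lift_is_lift.
move=> psi psi_lift x Hx.
have [Nphi phi_x] := section_liftP Ncover Hx.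
case: (lifts_uniq phi_x (psi_lift.1 x Hx)) => // psi_opp; exfalso.
apply: (Nopp _ _ (lift_image_mul_closed psi_lift)
  (lift_image_sign_free two_neq0 psi_lift) Nphi).
by exists x; rewrite // -psi_opp.
Qed.

End LiftFiniteSubgroup.

Section TreeAction.
Variable K : fieldType.
Variable v : K -> int.
Implicit Types (x y : PSL2 K) (A B M N g h k : 'M[K]_2).

Lemma vset_ext (L L' : vset K) : (forall w, L w <-> L' w) -> L = L'.
Proof.
by move=> LL'; apply: functional_extensionality => w; apply: propositional_extensionality.
Qed.

Lemma img_lattice A g : img A (lattice v g) = lattice v (A *m g).
Proof.
apply: vset_ext => w; split=> [[_ [[c [Oc ->]] ->]] | [c [Oc ->]]].
  by exists c; rewrite mulmxA.
by exists (g *m c); split; [exists c | rewrite mulmxA].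
Qed.

Lemma scale_lattice a g : scale a (lattice v g) = lattice v (a *: g).
Proof.
apply: vset_ext => w; split=> [[_ [[c [Oc ->]] ->]] | [c [Oc ->]]].
  by exists c; rewrite scalemxAl.
by exists (g *m c); split; [exists c | rewrite scalemxAl].
Qed.

Lemma acts_toP x g h : acts_to v x g h <->
  exists A a, [/\ lifts_to A x, a != 0 & lattice v (a *: (A *m g)) = lattice v h].
Proof.
split=> [[A [xA [a [a_neq0 gh]]]] | [A [a [xA a_neq0 gh]]]].
  exists A, a; split; [exact: pset_lifts | done |].
  by rewrite -scale_lattice -img_lattice; apply: vset_ext.
exists A; split; first exact: lifts_pset.
by exists a; split=> // w; rewrite img_lattice scale_lattice gh.
Qed.

Lemma lattice_congr a A M N : lattice v M = lattice v N ->
  lattice v (a *: (A *m M)) = lattice v (a *: (A *m N)).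
Proof. by move=> MN; rewrite -!scale_lattice -!img_lattice MN. Qed.

Lemma acts_one g : acts_to v (punit K) g g.
Proof.
apply/acts_toP; exists 1%:M, 1; rewrite scale1r mul1mx oner_neq0.
by split=> //; apply: lifts_pi.
Qed.

Lemma acts_mul x y g h k : acts_to v x h k -> acts_to v y g h -> acts_to v (pmul x y) g k.
Proof.
move=> /acts_toP [A [a [xA a_neq0 hk]]] /acts_toP [B [b [yB b_neq0 gh]]].
apply/acts_toP; exists (A *m B), (a * b); split; [exact: lifts_mul | exact: mulf_neq0 |].
by rewrite -hk -(lattice_congr a A gh) -scalemxAr scalerA mulmxA.
Qed.

Lemma acts_inv x g h : acts_to v x g h -> acts_to v (pinv x) h g.
Proof.
move=> /acts_toP [A [a [xA a_neq0 gh]]].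
apply/acts_toP; exists (invmx A), a^-1; split; [exact: lifts_inv | exact: invr_neq0 |].
rewrite -(lattice_congr a^-1 (invmx A) gh) -scalemxAr scalerA mulVf // scale1r.
by rewrite mulmxA mulVmx ?mul1mx //; apply: lifts_unit xA.
Qed.

Lemma vertex_stab_subgroup G g : is_subgroup G -> is_subgroup (vertex_stab v G g).
Proof.
case=> G1 GM GV; split=> [| x y [Gx xg] [Gy yg] | x [Gx xg]].
- by split; last exact: acts_one.
- by split; [apply: GM | apply: acts_mul xg yg].
- by split; [apply: GV | apply: acts_inv].
Qed.

Lemma edge_stab_subgroup G g h : is_subgroup G -> is_subgroup (edge_stab v G g h).
Proof.
case=> G1 GM GV; split=> [| x y [Gx xgh] [Gy ygh] | x [Gx xgh]].
- by split; last by left; split; apply: acts_one.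
- split; first exact: GM.
  case: xgh => [[xg xh] | [xg xh]]; case: ygh => [[yg yh] | [yg yh]].
  + by left; split; [apply: acts_mul xg yg | apply: acts_mul xh yh].
  + by right; split; [apply: acts_mul xh yg | apply: acts_mul xg yh].
  + by right; split; [apply: acts_mul xg yg | apply: acts_mul xh yh].
  + by left; split; [apply: acts_mul xh yg | apply: acts_mul xg yh].
- split; first exact: GV.
  by case: xgh => [[xg xh] | [xg xh]]; [left | right]; split; apply: acts_inv.
Qed.

End TreeAction.

Section Valuation.
Variable K : fieldType.
Variable v : K -> int.
Hypothesis vM : forall x y, x != 0 -> y != 0 -> v (x * y) = v x + v y.
Hypothesis vD : forall x y, x != 0 -> y != 0 -> x + y != 0 ->
  Num.min (v x) (v y) <= v (x + y).

(* [inO v x] is [vge 0 x], and [vclose v n a b] amounts to [vge n (a - b)]. *)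
Definition vge (n : int) (x : K) := x = 0 \/ n <= v x.

Lemma v1 : v 1 = 0.
Proof. by apply: (@addIr _ (v 1)); rewrite add0r -vM ?oner_neq0 // mulr1. Qed.

Lemma vN1 : v (-1) = 0.
Proof.
have N1_neq0 : (-1 : K) != 0 by rewrite oppr_eq0 oner_neq0.
by have := vM N1_neq0 N1_neq0; rewrite mulrNN mulr1 v1; lia.
Qed.

Lemma vN x : v (- x) = v x.
Proof.
have [-> | x_neq0] := eqVneq x 0; first by rewrite oppr0.
by rewrite -mulN1r vM ?vN1 ?add0r // oppr_eq0 oner_neq0.
Qed.

Lemma vV x : x != 0 -> v x^-1 = - v x.
Proof.
by move=> x_neq0; have := vM x_neq0 (invr_neq0 x_neq0); rewrite mulfV // v1; lia.
Qed.

Lemma vge_le m n x : m <= n -> vge n x -> vge m x.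
Proof. by move=> mn [->|nx]; [left | right; apply: le_trans nx]. Qed.

Lemma vgeN n x : vge n x -> vge n (- x).
Proof. by case=> [->|nx]; [left; rewrite oppr0 | right; rewrite vN]. Qed.

Lemma vgeD n x y : vge n x -> vge n y -> vge n (x + y).
Proof.
case=> [->|nx]; first by rewrite add0r.
case=> [->|ny]; first by rewrite addr0; right.
have [-> | x_neq0] := eqVneq x 0; first by rewrite add0r; right.
have [-> | y_neq0] := eqVneq y 0; first by rewrite addr0; right.
have [-> | xy_neq0] := eqVneq (x + y) 0; first by left.
by right; apply: le_trans (vD x_neq0 y_neq0 xy_neq0); rewrite le_min nx ny.
Qed.

Lemma vgeB n x y : vge n x -> vge n y -> vge n (x - y).
Proof. by move=> nx ny; apply/vgeD/vgeN. Qed.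

Lemma vgeM m n x y : vge m x -> vge n y -> vge (m + n) (x * y).
Proof.
case=> [->|mx]; first by rewrite mul0r; left.
case=> [->|ny]; first by rewrite mulr0; left.
have [-> | x_neq0] := eqVneq x 0; first by rewrite mul0r; left.
have [-> | y_neq0] := eqVneq y 0; first by rewrite mulr0; left.
by right; rewrite vM // lerD.
Qed.

Lemma vge_sum n (I : finType) (F : I -> K) : (forall i, vge n (F i)) -> vge n (\sum_i F i).
Proof. by move=> nF; apply: big_ind; [left | apply: vgeD |]. Qed.

Lemma vge_sign k : vge 0 ((-1) ^+ k).
Proof.
elim: k => [|k IH]; first by right; rewrite expr0 v1.
by rewrite exprS -[0]add0r; apply: vgeM => //; right; rewrite vN1.
Qed.

Lemma vge_seq (s : seq K) : exists n, forall x, x \in s -> vge n x.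
Proof.
elim: s => [|a s [n IH]]; first by exists 0.
exists (Num.min n (v a)) => x; rewrite inE => /orP [/eqP -> | xs].
  by right; rewrite ge_min lexx orbT.
by apply: vge_le (IH _ xs); rewrite ge_min lexx.
Qed.

Definition mx_vge (n : int) p q (A : 'M[K]_(p, q)) := forall i j, vge n (A i j).

Lemma mx_vge_exists p q (A : 'M[K]_(p, q)) : exists n, mx_vge n A.
Proof.
have [n nA] := vge_seq [seq A ij.1 ij.2 | ij : 'I_p * 'I_q].
exists n => i j; apply: nA.
by apply: (map_f (fun ij => A ij.1 ij.2) (x := (i, j))); rewrite mem_enum.
Qed.

Lemma mx_vge_le m n p q (A : 'M[K]_(p, q)) : m <= n -> mx_vge n A -> mx_vge m A.
Proof. by move=> mn nA i j; apply: vge_le (nA i j). Qed.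

Lemma mx_vgeB n p q (A B : 'M[K]_(p, q)) : mx_vge n A -> mx_vge n B -> mx_vge n (A - B).
Proof. by move=> nA nB i j; rewrite !mxE; apply: vgeB. Qed.

Lemma mx_vgeM m n p q r (A : 'M[K]_(p, q)) (B : 'M[K]_(q, r)) :
  mx_vge m A -> mx_vge n B -> mx_vge (m + n) (A *m B).
Proof. by move=> mA nB i j; rewrite mxE; apply: vge_sum => k; apply: vgeM. Qed.

Lemma mx_vgeZ m n p q (a : K) (A : 'M[K]_(p, q)) :
  vge m a -> mx_vge n A -> mx_vge (m + n) (a *: A).
Proof. by move=> ma nA i j; rewrite mxE; apply: vgeM. Qed.

(* The inverse of a determinant-one 2x2 matrix is its adjugate, whose entries
   are those of the matrix up to sign. *)
Lemma mx_vge_inv n (A : 'M[K]_2) : \det A = 1 -> mx_vge n A -> mx_vge n (invmx A).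
Proof.
move=> detA nA i j.
rewrite /invmx unitmxE detA unitr1 invr1 scale1r mxE /cofactor det_mx11 !mxE -[n]add0r.
exact: vgeM (vge_sign _) (nA _ _).
Qed.

Lemma mx_vge_min t m n p q (A : 'M[K]_(p, q)) :
  mx_vge (- t + m) A -> mx_vge (t + n) A -> mx_vge (Num.min m n) A.
Proof.
move=> tmA tnA i j; case: (tmA i j) => [-> | le1]; first by left.
case: (tnA i j) => [-> | le2]; first by left.
by right; rewrite ge_min; case: (lerP 0 t) => t0; apply/orP; [right | left]; lia.
Qed.

Lemma lattice_col (g : 'M[K]_2) j : lattice v g (col j g).
Proof.
exists (delta_mx j 0); rewrite -colE; split=> // i; rewrite mxE.
by case: (_ && _); [right; rewrite v1 | left].
Qed.

Lemma lattice_sub_mulmx (M N : 'M[K]_2) : (forall w, lattice v M w -> lattice v N w) ->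
  exists2 D, mx_vge 0 D & M = N *m D.
Proof.
move=> MN; have /fin_all_exists [c cP] : forall j, exists c : 'cV[K]_2,
    (forall i, inO v (c i 0)) /\ col j M = N *m c.
  by move=> j; case: (MN _ (lattice_col M j)) => c; exists c.
exists (\matrix_(i, j) c j i 0) => [i j | ]; first by rewrite mxE; apply: (cP j).1.
apply/matrixP => i j; have := congr1 (fun X : 'cV[K]_2 => X i 0) (cP j).2.
by rewrite !mxE => ->; apply: eq_bigr => k _; rewrite mxE.
Qed.

(* From a A g = h D and h = a A g C with D, C integral, the entries of A are
   bounded below by a constant minus v a, and those of invmx A (hence of A) by
   a constant plus v a; the two bounds together do not depend on a. *)
Lemma acts_to_bounded (g h : 'M[K]_2) : g \in unitmx -> h \in unitmx ->
  exists c, forall x, acts_to v x g h -> exists2 A, lifts_to A x & mx_vge c A.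
Proof.
move=> g_unit h_unit.
have [cg gP] := mx_vge_exists g; have [cgi giP] := mx_vge_exists (invmx g).
have [ch hP] := mx_vge_exists h; have [chi hiP] := mx_vge_exists (invmx h).
exists (Num.min (ch + 0 + cgi) (cg + 0 + chi)) => x /acts_toP [A [a [xA a_neq0 gh]]].
exists A => //; apply: (@mx_vge_min (v a)).
- have [D D0 defD] : exists2 D, mx_vge 0 D & a *: (A *m g) = h *m D.
    by apply: lattice_sub_mulmx; rewrite gh.
  have -> : A = a^-1 *: (h *m D *m invmx g).
    by rewrite -defD -scalemxAl mulmxK // scalerA mulVf // scale1r.
  apply: mx_vgeZ; first by right; rewrite vV.
  by apply: mx_vgeM => //; apply: mx_vgeM.
- have [C C0 defC] : exists2 C, mx_vge 0 C & h = a *: (A *m g) *m C.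
    by apply: lattice_sub_mulmx; rewrite gh.
  have A_unit := lifts_unit xA.
  have AX : A *m (a *: (g *m C *m invmx h)) = 1%:M.
    by rewrite -scalemxAr !mulmxA !scalemxAl -scalemxAl -defC mulmxV.
  have invA : invmx A = a *: (g *m C *m invmx h).
    by rewrite -[invmx A]mulmx1 -AX mulmxA mulVmx // mul1mx.
  rewrite -(invmxK A); apply: mx_vge_inv; first by rewrite det_inv xA.1 invr1.
  rewrite invA; apply: mx_vgeZ; first by right.
  by apply: mx_vgeM => //; apply: mx_vgeM.
Qed.

Lemma vertex_stab_bounded G (g : 'M[K]_2) : g \in unitmx -> exists c,
  forall x, vertex_stab v G g x -> exists2 A, lifts_to A x & mx_vge c A.
Proof.
move=> g_unit; have [c cP] := acts_to_bounded g_unit g_unit.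
by exists c => x [_ xg]; apply: cP.
Qed.

Lemma edge_stab_bounded G (g h : 'M[K]_2) : g \in unitmx -> h \in unitmx -> exists c,
  forall x, edge_stab v G g h x -> exists2 A, lifts_to A x & mx_vge c A.
Proof.
move=> g_unit h_unit.
have [c1 c1P] := acts_to_bounded g_unit g_unit.
have [c2 c2P] := acts_to_bounded g_unit h_unit.
exists (Num.min c1 c2) => x [_ [[xg _] | [xg _]]].
  have [A xA cA] := c1P x xg; exists A => //.
  by apply: mx_vge_le cA; rewrite ge_min lexx.
have [A xA cA] := c2P x xg; exists A => //.
by apply: mx_vge_le cA; rewrite ge_min lexx orbT.
Qed.

Section LocalField.
Variable p : K.
Hypothesis p_neq0 : p != 0.
Hypothesis vp : v p = 1.
Variable r : seq K.
Hypothesis residuesP : forall x, inO v x -> exists2 a, a \in r & vclose v 1 x a.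

Lemma vX k : v (p ^+ k) = k%:Z.
Proof.
elim: k => [|k IH]; first by rewrite expr0 v1.
by rewrite exprS vM ?expf_neq0 // IH vp; lia.
Qed.

Lemma exists_valued (n : int) : exists2 t, t != 0 & v t = n.
Proof.
case: n => k; first by exists (p ^+ k); rewrite ?expf_neq0 ?vX.
by exists (p ^+ k.+1)^-1; rewrite ?invr_neq0 ?expf_neq0 // vV ?expf_neq0 // vX NegzE.
Qed.

(* Expand x = a_0 + a_1 p + ... + a_(k-1) p^(k-1) + O(p^k) digit by digit. *)
Lemma approx_integral (k : nat) : exists L : seq K,
  forall x, vge 0 x -> exists2 a, a \in L & vge k%:Z (x - a).
Proof.
elim: k => [|k [L IH]].
  by exists [:: 0] => x x0; exists 0; rewrite ?inE // subr0.
exists [seq a + p ^+ k * b | a <- L, b <- r] => x x0.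
have [a aL xa] := IH x x0.
have pk_neq0 : p ^+ k != 0 by rewrite expf_neq0.
have [b br yb] : exists2 b, b \in r & vclose v 1 ((x - a) / p ^+ k) b.
  apply: residuesP; apply: (@vge_le _ (k%:Z + - k%:Z)); first by lia.
  by apply: vgeM => //; right; rewrite vV // vX.
exists (a + p ^+ k * b); first exact: allpairs_f.
have -> : x - (a + p ^+ k * b) = p ^+ k * ((x - a) / p ^+ k - b) by field.
apply: (@vge_le _ (k%:Z + 1)); first by lia.
apply: vgeM; first by right; rewrite vX.
by case: yb => [->|]; [left; rewrite subrr | right].
Qed.

Lemma approx_bounded (c n : int) : exists L : seq K,
  forall x, vge c x -> exists2 a, a \in L & vge n (x - a).
Proof.
have [t t_neq0 vt] := exists_valued (- c).
have [L0 L0P] := approx_integral `|n - c|%N.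
exists [seq a / t | a <- L0] => x cx.
have [a aL0 xa] : exists2 a, a \in L0 & vge `|n - c|%N%:Z (x * t - a).
  apply: L0P; apply: (@vge_le _ (c + - c)); first by lia.
  by apply: vgeM => //; right; rewrite vt.
exists (a / t); first exact: map_f.
have -> : x - a / t = (x * t - a) * t^-1 by field.
apply: (@vge_le _ (`|n - c|%N%:Z + c)); first by lia.
by apply: vgeM => //; right; rewrite vV // vt; lia.
Qed.

Lemma mx_approx_bounded (c n : int) : exists LM : seq 'M[K]_2,
  forall A, mx_vge c A -> exists2 R, R \in LM & mx_vge n (A - R).
Proof.
have [L LP] := approx_bounded c n.
pose entry (F : {ffun 'I_2 * 'I_2 -> seq_sub L}) := \matrix_(i < 2, j < 2) ssval (F (i, j)).
exists [seq entry F | F : {ffun 'I_2 * 'I_2 -> seq_sub L}] => A cA.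
have /fin_all_exists [F FP] : forall ij : 'I_2 * 'I_2,
    exists a : seq_sub L, vge n (A ij.1 ij.2 - ssval a).
  by move=> [i j]; have [a aL Aa] := LP _ (cA i j); exists (SeqSub aL).
exists (entry (finfun F)); first by apply: map_f; rewrite mem_enum.
by move=> i j; rewrite !mxE ffunE; apply: (FP (i, j)).
Qed.

Section DiscreteSubgroup.
Variable G : PSL2 K -> Prop.
Hypothesis G_subgroup : is_subgroup G.
Implicit Types (x y : PSL2 K) (A B : 'M[K]_2).

(* B^-1 A - 1 = B^-1 (A - B) >= n0, so B^-1 A lifts an element of G that is
   n0-close to 1. *)
Lemma discrete_close_eq n0 c x y A B :
  (forall z, G z -> pclose v n0 (punit K) z -> z = punit K) ->
  G x -> G y -> lifts_to A x -> lifts_to B y ->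
  mx_vge c B -> mx_vge (n0 - c) (A - B) -> x = y.
Proof.
move=> isolated1 Gx Gy xA yB cB ABn.
case: G_subgroup => _ GM GV.
have yxD := lifts_mul (lifts_inv yB) xA.
have D1 : mx_vge (c + (n0 - c)) (invmx B *m A - 1%:M).
  rewrite -(mulVmx (lifts_unit yB)) -mulmxBr.
  by apply: mx_vgeM => //; apply: mx_vge_inv yB.1 _.
have yx1 : pmul (pinv y) x = punit K.
  apply: isolated1; first by apply: GM => //; apply: GV.
  exists 1%:M, (invmx B *m A); do 2?split; first exact: lifts_pset (lifts_one K).
    exact: lifts_pset yxD.
  move=> i j; have := vgeN (D1 i j); rewrite !mxE opprB.
  case=> [/eqP | n0D]; first by rewrite subr_eq0 => /eqP; left.
  by right; apply: le_trans n0D; lia.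
have BA : invmx B *m A = 1%:M \/ invmx B *m A = - 1%:M.
  by apply: lifts_uniq (lifts_one K) _; rewrite -yx1.
have defA D : invmx B *m A = D -> A = B *m D.
  by move<-; rewrite mulmxA mulmxV ?mul1mx //; apply: lifts_unit yB.
apply: lifts_inj xA (lifts_pm yB _).
by case: BA => /defA ->; rewrite ?mulmxN mulmx1; [left | right].
Qed.

Hypothesis G_discrete : is_discrete v G.

Lemma bounded_lifts_finite c : exists s : seq 'M[K]_2,
  forall x A, G x -> (exists2 B, lifts_to B x & mx_vge c B) -> lifts_to A x -> A \in s.
Proof.
have [G1 _ _] := G_subgroup.
have [n0 isolated1] := G_discrete G1.
have [LM LMP] := mx_approx_bounded c (n0 - c).
pose near R A := exists2 x, G x & [/\ lifts_to A x, mx_vge c A & mx_vge (n0 - c) (A - R)].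
pose pick R := epsilon (inhabits 0) (near R).
exists (flatten [seq [:: pick R; - pick R] | R <- LM]) => x A Gx [B xB cB] xA.
have [R RLM BR] := LMP B cB.
have [y Gy [yP cP RP]] : near R (pick R) by apply: epsilon_spec; exists B, x.
have xy : x = y.
  apply: discrete_close_eq isolated1 Gx Gy xB yP cP _.
  have -> : B - pick R = (B - R) - (pick R - R) by rewrite opprB addrA subrK.
  exact: mx_vgeB.
apply/flattenP; exists [:: pick R; - pick R]; first exact: map_f.
by rewrite xy in xA; case: (lifts_uniq yP xA) => ->; rewrite !inE eqxx ?orbT.
Qed.

Hypothesis G_no2 : no_2_torsion G.

Lemma unique_lift_bounded (H : PSL2 K -> Prop) c :
  is_subgroup H -> (forall x, H x -> G x) ->
  (forall x, H x -> exists2 A, lifts_to A x & mx_vge c A) -> unique_lift H.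
Proof.
move=> H_subgroup HG Hc; have [s sP] := bounded_lifts_finite c.
apply: (unique_lift_finite H_subgroup) (s) _ => [x Hx | M [x Hx xM]].
  exact: G_no2 (HG x Hx).
exact: sP (HG x Hx) (Hc x Hx) xM.
Qed.

End DiscreteSubgroup.

End LocalField.

End Valuation.

Theorem lemma3p1 (K : fieldType) (v : K -> int)
  (HK : is_nonarch_local_field v)
  (G : PSL2 K -> Prop) (HG : is_subgroup G) (Hdisc : is_discrete v G)
  (H2 : no_2_torsion G) :
  (forall g : 'M[K]_2, g \in unitmx -> unique_lift (vertex_stab v G g)) /\
  (forall g h : 'M[K]_2, g \in unitmx -> h \in unitmx -> adjacent v g h ->
     unique_lift (edge_stab v G g h)).
Proof.
case: HK => [[vM vD [p [p_neq0 vp]]] [r [_ residuesP]] _].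
have lift_bounded := unique_lift_bounded vM vD p_neq0 vp residuesP HG Hdisc H2.
split=> [g g_unit | g h g_unit h_unit _].
  have [c cP] := vertex_stab_bounded vM vD G g_unit.
  exact: lift_bounded _ c (vertex_stab_subgroup v g HG) (fun x => @proj1 _ _) cP.
have [c cP] := edge_stab_bounded vM vD G g_unit h_unit.
exact: lift_bounded _ c (edge_stab_subgroup v g h HG) (fun x => @proj1 _ _) cP.
Qed.
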